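(* Let $\mu$ be a measure on $L_n$ and define $\tilde\mu(j)=\mu(j)+\mu(n+1-j)$ for $1\le j\le n$. Then $C^0_{\tilde\mu}\le C^0_\mu$ and $C_{\tilde\mu}\le C_\mu$.
   Context: $L_n$ is the path graph with vertices $\{1,\dots,n\}$ and edges $\{j,j+1\}$, with distance $|i-j|$. A measure on $L_n$ is a weight function $\mu:\{1,\dots,n\}\to(0,\infty)$, $\mu(A)=\sum_{v\in A}\mu(v)$. Closed balls: $B(x,r)=\{y:|x-y|\le r\}$. $C_\mu=\sup\{\mu(B(x,2k+1))/\mu(B(x,k)):1\le x\le n,\ k\ge0\}$ and $C^0_\mu=\max_x\mu(B(x,1))/\mu(x)$. *)

From HB Require Import structures.
From mathcomp Require Import all_boot all_order all_algebra.
From mathcomp Require Import all_classical all_reals.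
Set Implicit Arguments. Unset Strict Implicit. Unset Printing Implicit Defensive.
Import Order.TTheory GRing.Theory Num.Theory.
Local Open Scope classical_set_scope.
Local Open Scope ring_scope.

(* The path graph L_n has vertex set {1,...,n}; distance |i - j|. *)
Definition pdist (i j : nat) : nat := ((i - j) + (j - i))%N.

Definition is_measure (R : realType) (n : nat) (mu : nat -> R) : Prop :=
  forall v : nat, (1 <= v <= n)%N -> 0 < mu v.

Definition mu_ball (R : realType) (n : nat) (mu : nat -> R) (x r : nat) : R :=
  \sum_(1 <= y < n.+1 | (pdist x y <= r)%N) mu y.

Definition C_doub (R : realType) (n : nat) (mu : nat -> R) : R :=
  sup [set t : R | exists x k : nat, (1 <= x <= n)%N /\
         t = mu_ball n mu x (k.*2.+1) / mu_ball n mu x k].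

Definition C0_doub (R : realType) (n : nat) (mu : nat -> R) : R :=
  sup [set t : R | exists x : nat, (1 <= x <= n)%N /\
         t = mu_ball n mu x 1 / mu x].

Definition sym_measure (R : realType) (n : nat) (mu : nat -> R) : nat -> R :=
  fun j => mu j + mu (n.+1 - j)%N.

(* The reflection j |-> n + 1 - j is an isometry of L_n, so a ball for the
   symmetrized measure weighs mu(B(x, r)) + mu(B(n + 1 - x, r)).  Every ratio
   defining C^0 or C for the symmetrized measure is therefore a mediant
   (a1 + a2) / (b1 + b2) of two ratios a1 / b1, a2 / b2 defining the same
   constant for mu, and a mediant never exceeds a common upper bound of the two
   ratios.  Since [sup] of a set unbounded above is a junk value, we also check
   that all these ratios are bounded, each by (total mass) / mu(x). *)
From mathcomp Require Import all_boot all_order all_algebra.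
From mathcomp Require Import all_classical all_reals.
From mathcomp Require Import zify.
Import Order.TTheory GRing.Theory Num.Theory.
Local Open Scope classical_set_scope.
Local Open Scope ring_scope.

Lemma ler_sum_subset (R : numDomainType) (I : eqType) (r : seq I)
    (P Q : pred I) (F : I -> R) :
  (forall i, i \in r -> 0 <= F i) -> (forall i, P i -> Q i) ->
  \sum_(i <- r | P i) F i <= \sum_(i <- r | Q i) F i.
Proof.
move=> F_ge0 PQ; rewrite big_mkcond [leRHS]big_mkcond !big_seq.
apply: ler_sum => i /F_ge0 Fi_ge0.
by case: (boolP (P i)) => [/PQ -> | _] //; case: (Q i).
Qed.

Lemma ler_sum_term (R : numDomainType) (I : eqType) (r : seq I)
    (P : pred I) (F : I -> R) (j : I) :
  uniq r -> j \in r -> P j -> (forall i, i \in r -> 0 <= F i) ->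
  F j <= \sum_(i <- r | P i) F i.
Proof.
move=> r_uniq jr Pj F_ge0.
rewrite big_mkcond (bigD1_seq j) //= Pj lerDl -big_mkcondl.
by rewrite big_seq_cond; apply: sumr_ge0 => i /andP[/F_ge0].
Qed.

Lemma ler_mediant (R : numFieldType) (s a1 b1 a2 b2 : R) :
  0 < b1 -> 0 < b2 -> a1 / b1 <= s -> a2 / b2 <= s ->
  (a1 + a2) / (b1 + b2) <= s.
Proof.
move=> b1_gt0 b2_gt0; rewrite !ler_pdivrMr ?addr_gt0 // mulrDr.
exact: lerD.
Qed.

Lemma sup_le_mediant (R : realType) (S T : set R) :
  has_ubound S -> (S !=set0 -> T !=set0) ->
  (forall t, T t -> exists a1 b1 a2 b2,
     [/\ S (a1 / b1), S (a2 / b2), 0 < b1, 0 < b2 & t = (a1 + a2) / (b1 + b2)]) ->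
  sup T <= sup S.
Proof.
move=> S_ub ST T_mediant.
have [T_n0 | T_0] := pselect (T !=set0); last first.
  have /nonemptyPn -> : ~ (S !=set0) by move/ST.
  by move/nonemptyPn: T_0 => ->.
apply: ge_sup => // t /T_mediant[a1 [b1 [a2 [b2 [S1 S2 b1_gt0 b2_gt0 ->]]]]].
by apply: ler_mediant; rewrite // ub_le_sup.
Qed.

Lemma mu_ball_sym_measure (R : realType) (n : nat) (mu : nat -> R) (x r : nat) :
  (1 <= x <= n)%N ->
  mu_ball n (sym_measure n mu) x r = mu_ball n mu x r + mu_ball n mu (n.+1 - x) r.
Proof.
move=> x_in; rewrite /mu_ball /sym_measure big_split /=; congr (_ + _).
rewrite big_nat_rev /= add1n big_nat_cond [RHS]big_nat_cond.
apply: eq_big => [i | i /andP[/andP[i_ge1 i_le] _]]; last by congr (mu _); lia.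
by rewrite /pdist; lia.
Qed.

Section BallRatios.
Variables (R : realType) (n : nat) (mu : nat -> R).
Hypothesis mu_pos : is_measure n mu.

Let mass : R := \sum_(1 <= i < n.+1) mu i.

Let mu_ge0 i : i \in index_iota 1 n.+1 -> 0 <= mu i.
Proof. by rewrite mem_index_iota ltnS => /mu_pos/ltW. Qed.

Let in_iota x : (1 <= x <= n)%N -> x \in index_iota 1 n.+1.
Proof. by rewrite mem_index_iota ltnS. Qed.

Lemma mu_le_ball x r : (1 <= x <= n)%N -> mu x <= mu_ball n mu x r.
Proof.
move=> x_in; apply: ler_sum_term; rewrite ?iota_uniq ?in_iota //.
by rewrite /pdist !subnn.
Qed.

Lemma ball_ratio_ubound : exists M : R, forall x r b,
  (1 <= x <= n)%N -> mu x <= b -> mu_ball n mu x r / b <= M.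
Proof.
exists (\sum_(1 <= y < n.+1) mass / mu y) => x r b x_in mux_le_b.
have mux_gt0 := mu_pos _ x_in.
have b_gt0 : 0 < b := lt_le_trans mux_gt0 mux_le_b.
have mass_ge0 : 0 <= mass by rewrite /mass big_seq; apply: sumr_ge0 => i /mu_ge0.
apply: (@le_trans _ _ (mass / b)).
  by rewrite ler_pM2r ?invr_gt0 // /mass; apply: ler_sum_subset.
apply: (@le_trans _ _ (mass / mu x)).
  by rewrite ler_wpM2l // lef_pV2 ?posrE.
apply: (@ler_sum_term _ _ _ xpredT (fun y => mass / mu y)); rewrite ?iota_uniq ?in_iota //.
by move=> y y_in; rewrite divr_ge0 ?mu_ge0.
Qed.

Let reflect_in x : (1 <= x <= n)%N -> (1 <= n.+1 - x <= n)%N.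
Proof. by lia. Qed.

Lemma C0_doub_sym_measure_le : C0_doub n (sym_measure n mu) <= C0_doub n mu.
Proof.
have [M M_ub] := ball_ratio_ubound.
apply: sup_le_mediant.
- by exists M => _ [x [x_in ->]]; apply: M_ub.
- by move=> [_ [x [x_in _]]]; eexists; exists x.
move=> _ [x [x_in ->]].
exists (mu_ball n mu x 1), (mu x), (mu_ball n mu (n.+1 - x) 1), (mu (n.+1 - x)).
split; [by exists x | by exists (n.+1 - x)%N; rewrite reflect_in | | |].
- exact: mu_pos.
- exact/mu_pos/reflect_in.
- by rewrite mu_ball_sym_measure.
Qed.

Lemma C_doub_sym_measure_le : C_doub n (sym_measure n mu) <= C_doub n mu.
Proof.
have [M M_ub] := ball_ratio_ubound.
have ball_gt0 x r : (1 <= x <= n)%N -> 0 < mu_ball n mu x r.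
  by move=> x_in; exact: lt_le_trans (mu_pos _ x_in) (mu_le_ball x r x_in).
apply: sup_le_mediant.
- by exists M => _ [x [k [x_in ->]]]; apply/M_ub/mu_le_ball.
- by move=> [_ [x [k [x_in _]]]]; eexists; exists x, k.
move=> _ [x [k [x_in ->]]].
exists (mu_ball n mu x k.*2.+1), (mu_ball n mu x k),
  (mu_ball n mu (n.+1 - x) k.*2.+1), (mu_ball n mu (n.+1 - x) k).
split; [by exists x, k | by exists (n.+1 - x)%N, k; rewrite reflect_in | | |].
- exact: ball_gt0.
- exact/ball_gt0/reflect_in.
- by rewrite !mu_ball_sym_measure.
Qed.

End BallRatios.

Theorem lemma3p1 (R : realType) (n : nat) (mu : nat -> R) :
  is_measure n mu ->
  C0_doub n (sym_measure n mu) <= C0_doub n mu /\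
  C_doub n (sym_measure n mu) <= C_doub n mu.
Proof.
move=> mu_pos.
by split; [exact: C0_doub_sym_measure_le | exact: C_doub_sym_measure_le].
Qed.
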